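(* Suppose that $(A_1,B_1)$ and $(A_2,B_2)$ are pairs of Gram mates. Then $A_1\otimes A_2$ and $B_1\otimes B_2$ are Gram mates, where $\otimes$ denotes the Kronecker product.
   Context: Two $(0,1)$ matrices $A,B$ are Gram mates if $AA^T=BB^T$, $A^TA=B^TB$ and $A\neq B$. *)

From mathcomp Require Import all_boot all_algebra.
From mathcomp Require Export mxtens.
Set Implicit Arguments. Unset Strict Implicit. Unset Printing Implicit Defensive.
Import GRing.Theory.
Local Open Scope ring_scope.

Definition zero_one_mx (m n : nat) (A : 'M[int]_(m, n)) : Prop :=
  forall i j, A i j = 0 \/ A i j = 1.

Definition gram_mates (m n : nat) (A B : 'M[int]_(m, n)) : Prop :=
  [/\ zero_one_mx A, zero_one_mx B,
      A *m A^T = B *m B^T, A^T *m A = B^T *m B & A <> B].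

From mathcomp Require Import all_boot all_algebra.
From mathcomp Require Import mxtens.
Set Implicit Arguments. Unset Strict Implicit. Unset Printing Implicit Defensive.
Local Open Scope ring_scope.
Import GRing.Theory Num.Theory.

(* The Gram identities pass to Kronecker products by the mixed-product rule
   (A1 *t A2) *m (C1 *t C2) = (A1 *m C1) *t (A2 *m C2) and (A *t B)^T = A^T *t B^T.
   For A1 *t A2 <> B1 *t B2: Gram mates are nonzero, since the diagonal of
   A A^T consists of sums of squares, so A A^T = 0 forces A = 0.  Pick an entry A2 k l = 1; comparing blocks gives
   A1 = B2 k l *: B1 with B2 k l in {0, 1}, and A1 <> 0 rules out B2 k l = 0,
   so A1 = B1, a contradiction. *)

Section GramMatrix.

Variables (R : realDomainType) (m n : nat).
Implicit Types A B : 'M[R]_(m, n).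

Lemma mulmx_trmx_diag A i : (A *m A^T) i i = \sum_j A i j ^+ 2.
Proof. by rewrite mxE; apply: eq_bigr => j _; rewrite mxE. Qed.

Lemma mulmx_trmx_eq0 A : (A *m A^T == 0) = (A == 0).
Proof.
apply/eqP/eqP => [AAt0 | ->]; last by rewrite mul0mx.
apply/matrixP => i j; rewrite mxE; apply/eqP.
have /eqP := congr1 (fun M : 'M_m => M i i) AAt0.
rewrite mulmx_trmx_diag mxE psumr_eq0 => [/allP/(_ j) | k _]; last exact: sqr_ge0.
by rewrite mem_index_enum sqrf_eq0 => /(_ isT).
Qed.

Lemma gram_eq_neq0 A B : A *m A^T = B *m B^T -> A != B -> A != 0.
Proof.
move=> eqAB; apply: contraNneq => A0.
have: B *m B^T == 0 by rewrite -eqAB A0 mul0mx.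
by rewrite mulmx_trmx_eq0 A0 eq_sym.
Qed.

End GramMatrix.

Lemma zero_one_tensmx m1 n1 m2 n2 (A : 'M[int]_(m1, n1)) (B : 'M[int]_(m2, n2)) :
  zero_one_mx A -> zero_one_mx B -> zero_one_mx (A *t B).
Proof.
move=> zoA zoB i j.
case: (mxtens_indexP i) => i1 i2; case: (mxtens_indexP j) => j1 j2.
by rewrite tensmxE; case: (zoA i1 j1) => ->; case: (zoB i2 j2) => ->;
  rewrite ?mul0r ?mulr1; [left | left | left | right].
Qed.

Lemma zero_one_mx_neq0 m n (A : 'M[int]_(m, n)) :
  zero_one_mx A -> A != 0 -> exists i j, A i j = 1.
Proof.
move=> zoA /matrix0Pn [i [j Anz]]; exists i, j.
by case: (zoA i j) Anz => // ->.
Qed.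

Lemma zero_one_tensmx_cancel_l m1 n1 m2 n2
    (A1 B1 : 'M[int]_(m1, n1)) (A2 B2 : 'M[int]_(m2, n2)) :
  zero_one_mx A2 -> zero_one_mx B2 -> A1 != 0 -> A2 != 0 ->
  A1 *t A2 = B1 *t B2 -> A1 = B1.
Proof.
move=> zoA2 zoB2 A1nz A2nz eqAB.
have [k [l A2kl]] := zero_one_mx_neq0 zoA2 A2nz.
have A1E : A1 = B2 k l *: B1.
  apply/matrixP => i j; rewrite mxE.
  have := congr1 (fun M : 'M_(m1 * m2, n1 * n2) =>
    M (mxtens_index (i, k)) (mxtens_index (j, l))) eqAB.
  by rewrite /= !tensmxE A2kl mulr1 mulrC.
case: (zoB2 k l) => B2kl; last by rewrite A1E B2kl scale1r.
by move: A1nz; rewrite A1E B2kl scale0r eqxx.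
Qed.

Theorem proposition5p3 (m1 n1 m2 n2 : nat)
  (A1 B1 : 'M[int]_(m1, n1)) (A2 B2 : 'M[int]_(m2, n2)) :
  gram_mates A1 B1 -> gram_mates A2 B2 ->
  gram_mates (tensmx A1 A2) (tensmx B1 B2).
Proof.
case=> zoA1 zoB1 rows1 cols1 /eqP neq1; case=> zoA2 zoB2 rows2 cols2 /eqP neq2.
split; try exact: zero_one_tensmx.
- by rewrite !trmx_tens !tensmx_mul rows1 rows2.
- by rewrite !trmx_tens !tensmx_mul cols1 cols2.
have A1nz := gram_eq_neq0 rows1 neq1; have A2nz := gram_eq_neq0 rows2 neq2.
by move/(zero_one_tensmx_cancel_l zoA2 zoB2 A1nz A2nz); apply/eqP.
Qed.
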